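(* Let $d\ge 2$, let $H$ be a $d$-regular graph on vertex set $[h]$, and let $G$ be any $n$-lift of $H$. Then \[\lambda^*(G)\le 96\sup_{x\in Z}|\langle x,x\rangle_{N,E^*}|+480\sqrt{d}.\]
   Context: An $n$-lift $G$ of $H$ has vertex set $\{(i,j): i\in[h], j\in[n]\}$ with fibres $V_i=\{(i,j):j\in[n]\}$; for each edge $ii'$ of $H$ there is a perfect matching between $V_i$ and $V_{i'}$, and these are the only edges. $M$ is the adjacency matrix of $G$; $\overline{M}_{(i,j),(i',j')}=1/n$ if $ii'\in E(H)$ and $0$ otherwise; $N=M-\overline{M}$. The new eigenvalues of $G$ are the eigenvalues of $M$ on the subspace of vectors with $\sum_{v\in V_i}x_v=0$ for all $i$; $\lambda^*(G)$ is the largest absolute value of a new eigenvalue. For a matrix $A$, vectors $x,y$ and $E\subseteq\mathbb{R}^2$, $\langle x,y\rangle_{A,E}=\sum_{u,v:(x_u,y_v)\in E}x_uA_{uv}y_v$. Let $D^{+}=\{0\}\cup\{2^k/\sqrt{nh}:k\in\mathbb{Z},k\ge 0\}$, $E^*=\{(x_1,x_2)\in\mathbb{R}^2:x_1,x_2>0,\ x_1/x_2\in(d^{-1/2},d^{1/2})\}$, and \[Z=\Big\{x\in\mathbb{R}^{V(G)}:\|x\|_2^2\le 10,\ x_v\in D^+\ \forall v,\ \sup_v x_v\le d\cdot\inf_{v:x_v\ne0}x_v\Big\}.\] *)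

From HB Require Import structures.
From mathcomp Require Import all_boot all_order all_algebra.
Set Implicit Arguments. Unset Strict Implicit. Unset Printing Implicit Defensive.
Import Order.TTheory GRing.Theory Num.Theory.
Local Open Scope ring_scope.

Definition simple_graph (h : nat) (H : rel 'I_h) : Prop :=
  (forall i, ~~ H i i) /\ (forall i i', H i i' = H i' i).

Definition regular (h d : nat) (H : rel 'I_h) : Prop :=
  forall i, #|[set i' | H i i']| = d.

(* Vertex set of an n-lift: pairs (i,j), i in [h], j in [n]; fibre V_i = {(i,j)}. *)
Definition lvert (h n : nat) := ('I_h * 'I_n)%type.

(* G (given by its adjacency relation e) is an n-lift of H: e is symmetric,
   every edge of G lies over an edge of H, and for every edge ii' of H the
   edges of G between V_i and V_i' form a perfect matching. *)
Definition is_lift (h n : nat) (H : rel 'I_h) (e : rel (lvert h n)) : Prop :=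
  (forall u v, e u v = e v u) /\
  (forall u v, e u v -> H u.1 v.1) /\
  (forall (i i' : 'I_h) (j : 'I_n), H i i' ->
     exists! j' : 'I_n, e (i, j) (i', j')).

Section Mats.
Variable R : rcfType.
Variables (h n : nat) (H : rel 'I_h) (e : rel (lvert h n)).

Definition adjM (u v : lvert h n) : R := if e u v then 1 else 0.
Definition adjMbar (u v : lvert h n) : R := if H u.1 v.1 then n%:R^-1 else 0.
Definition matN (u v : lvert h n) : R := adjM u v - adjMbar u v.

(* x is orthogonal to the fibre-constant vectors *)
Definition fibre_sum_zero (x : lvert h n -> R) : Prop :=
  forall i : 'I_h, \sum_(j : 'I_n) x (i, j) = 0.

Definition new_eigenvalue (lambda : R) : Prop :=
  exists x : lvert h n -> R,
    (exists v, x v != 0) /\ fibre_sum_zero x /\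
    (forall u, \sum_(v : lvert h n) adjM u v * x v = lambda * x u).

Definition restr_form (A : lvert h n -> lvert h n -> R) (E : R -> R -> bool)
    (x y : lvert h n -> R) : R :=
  \sum_(u : lvert h n) \sum_(v : lvert h n)
     (if E (x u) (y v) then x u * A u v * y v else 0).
End Mats.

Definition Estar (R : rcfType) (d : nat) (x1 x2 : R) : bool :=
  [&& 0 < x1, 0 < x2, (Num.sqrt (d%:R : R))^-1 < x1 / x2
     & x1 / x2 < Num.sqrt (d%:R : R)].

Definition Dplus (R : rcfType) (n h : nat) (t : R) : Prop :=
  t = 0 \/ exists k : nat, t = 2%:R ^+ k / Num.sqrt ((n * h)%:R).

(* the set Z; "sup_v x_v <= d * inf_{v : x_v <> 0} x_v" written pointwise *)
Definition inZ (R : rcfType) (h n d : nat) (x : lvert h n -> R) : Prop :=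
  \sum_(v : lvert h n) x v ^+ 2 <= 10%:R /\
  (forall v, Dplus n h (x v)) /\
  (forall u v, x v != 0 -> x u <= d%:R * x v).

(* A unit new eigenvector [x] has [x^T N x = lambda], since [Mbar] kills vectors
   with zero fibre sums.  The quadratic form of [N] has zero diagonal, hence is affine in each
   coordinate: moving the coordinates one by one to the ends of a box around [x] whose ends lie
   in [+-D^+] does not decrease [|x^T N x|], and yields [y] with [||y||^2 <= 5].
   Split [y^T N y] according to whether [(|y_u|, |y_v|)] lies in [E^*].  Off [E^*],
   [sqrt d |y_u y_v| <= y_u^2 + y_v^2] and [|N| <= M + Mbar], whose rows sum to [2d]; this part
   is at most [20 sqrt d].  On [E^*], the sign decomposition of [y] writes the sum as
   [2<y+> + 2<y-> - <|y|>] with restricted forms of nonnegative [D^+]-vectors [w].  A pair in [E^*]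
   has ratio below [sqrt d], so for the levels [t_m = sqrt d^m / sqrt(nh)] it lies in a window
   [[t_m, t_(m+2))], whose entries differ by a factor at most [d]; rescaled by a power of two the
   window lies in [Z].  Telescoping over [m] gives [|<w>| <= 3 ||w||^2 sup_Z], so the [E^*] part is
   at most [75 sup_Z]. *)

From Stdlib Require Import FunctionalExtensionality.
From HB Require Import structures.
From mathcomp Require Import all_boot all_order all_algebra ring lra.
Set Implicit Arguments. Unset Strict Implicit. Unset Printing Implicit Defensive.
Import Order.TTheory GRing.Theory Num.Theory.
Local Open Scope ring_scope.

Section QuadraticForm.
Variables (R : realDomainType) (V : finType).
Implicit Types (A : V -> V -> R) (x y : V -> R).

Definition qform A x : R := \sum_u \sum_v x u * A u v * x v.

Definition sqnorm x : R := \sum_u x u ^+ 2.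

Definition update x (u0 : V) (t : R) : V -> R :=
  fun u => if u == u0 then t else x u.

Lemma sqnorm_ge0 x : 0 <= sqnorm x.
Proof. by apply: sumr_ge0 => u _; rewrite sqr_ge0. Qed.

Lemma sqr_le_sqnorm x u : x u ^+ 2 <= sqnorm x.
Proof.
by rewrite /sqnorm (bigD1 u) //= lerDl; apply: sumr_ge0 => v _; rewrite sqr_ge0.
Qed.

Lemma sum_sym_sqnorm A x (c : R) : (forall u v, A u v = A v u) ->
  (forall u, \sum_v A u v = c) ->
  \sum_u \sum_v A u v * (x u ^+ 2 + x v ^+ 2) = (c + c) * sqnorm x.
Proof.
move=> A_sym A_row.
under eq_bigr do under eq_bigr do rewrite mulrDr.
under eq_bigr do rewrite big_split /=.
rewrite big_split mulrDl /sqnorm !mulr_sumr /=; congr (_ + _).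
  by apply: eq_bigr => u _; rewrite -mulr_suml A_row.
rewrite exchange_big /=; apply: eq_bigr => v _.
by under eq_bigr do rewrite A_sym; rewrite -mulr_suml A_row.
Qed.

Lemma qformN A x : qform (fun u v => - A u v) x = - qform A x.
Proof.
rewrite /qform -sumrN; apply: eq_bigr => u _; rewrite -sumrN.
by apply: eq_bigr => v _; rewrite mulrN mulNr.
Qed.

Section ZeroDiagonal.
Variable A : V -> V -> R.
Hypothesis A_diag : forall u, A u u = 0.

(* With a zero diagonal the form has no [t^2] term in any single coordinate. *)
Lemma qform_update_affine x u0 :
  exists a b : R, forall t, qform A (update x u0 t) = b + t * a.
Proof.
exists ((\sum_(v | v != u0) A u0 v * x v) + \sum_(u | u != u0) x u * A u u0).
exists (\sum_(u | u != u0) \sum_(v | v != u0) x u * A u v * x v).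
move=> t; rewrite /qform (bigD1 u0) //= (bigD1 u0) //= /update eqxx A_diag.
rewrite mulr0 mul0r add0r.
have -> : \sum_(v | v != u0) t * A u0 v * (if v == u0 then t else x v)
    = t * \sum_(v | v != u0) A u0 v * x v.
  by rewrite mulr_sumr; apply: eq_bigr => v /negbTE ->; rewrite mulrA.
have -> : \sum_(u | u != u0) \sum_v (if u == u0 then t else x u) * A u v *
      (if v == u0 then t else x v)
    = t * (\sum_(u | u != u0) x u * A u u0) +
      \sum_(u | u != u0) \sum_(v | v != u0) x u * A u v * x v.
  rewrite mulr_sumr -big_split /=; apply: eq_bigr => u /negbTE ->.
  rewrite (bigD1 u0) //= eqxx mulrC; congr (_ + _).
  by apply: eq_bigr => v /negbTE ->.
by rewrite addrA addrC mulrDr.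
Qed.

Lemma qform_update_endpoint x u0 (a b : R) : a <= x u0 <= b ->
  exists2 t, t = a \/ t = b & qform A x <= qform A (update x u0 t).
Proof.
move=> /andP[ha hb]; have [al [be E]] := qform_update_affine x u0.
have -> : qform A x = qform A (update x u0 (x u0)).
  by congr qform; apply: functional_extensionality => u; rewrite /update; case: eqP => // ->.
rewrite E; case: (lerP 0 al) => hal.
  by exists b; [right | rewrite E lerD2l ler_wpM2r].
by exists a; [left | rewrite E lerD2l ler_wnM2r // ltW].
Qed.

Lemma qform_box_vertex x (a b : V -> R) : (forall u, a u <= x u <= b u) ->
  exists2 y, (forall u, y u = a u \/ y u = b u) & qform A x <= qform A y.
Proof.
move=> hab.
suff [y hy hq] : exists2 y, (forall u, (u \in enum V -> y u = a u \/ y u = b u)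
    /\ (u \notin enum V -> y u = x u)) & qform A x <= qform A y.
  by exists y => // u; apply: (proj1 (hy u)); rewrite mem_enum.
elim: (enum V) => [|u0 s [y hy hq]]; first by exists x.
have [u0s | u0s] := boolP (u0 \in s).
  exists y => // u; rewrite in_cons negb_or; split.
    by case/orP => [/eqP -> | ]; apply: (proj1 (hy _)).
  by case/andP => _ /(proj2 (hy u)).
have /qform_update_endpoint [t ht hq'] : a u0 <= y u0 <= b u0.
  by rewrite (proj2 (hy u0) u0s).
exists (update y u0 t); last exact: le_trans hq'.
move=> u; rewrite /update in_cons; case: (u =P u0) => [-> | _] /=; last exact: hy.
by split.
Qed.

End ZeroDiagonal.

Lemma abs_qform_box_vertex A x (a b : V -> R) : (forall u, A u u = 0) ->
  (forall u, a u <= x u <= b u) ->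
  exists2 y, (forall u, y u = a u \/ y u = b u) & `|qform A x| <= `|qform A y|.
Proof.
move=> A_diag hab; case: (lerP 0 (qform A x)) => hx.
  have [y hy hq] := qform_box_vertex A_diag hab.
  by exists y => //; rewrite ger0_norm //; apply: le_trans hq (ler_norm _).
have NA_diag : forall u, (fun u v => - A u v) u u = 0 by move=> u; rewrite A_diag oppr0.
have [y hy] := qform_box_vertex (A := fun u v => - A u v) NA_diag hab.
rewrite !qformN lerN2 => hq; exists y => //.
by rewrite ltr0_norm // -normrN; apply: le_trans (ler_norm _); rewrite lerN2.
Qed.

End QuadraticForm.

(* [R] need not be archimedean, hence the explicit bound [N]. *)
Lemma exprn_bracket (R : realFieldType) (b : R) : 2%:R <= b ->
  forall (N : nat) (t : R), 1 <= t -> t <= N%:R ->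
  exists k, b ^+ k <= t < b ^+ k.+1.
Proof.
move=> hb; have b0 : 0 < b by apply: lt_le_trans hb.
elim=> [|N IH] t t1 tN; first by have := le_trans t1 tN; rewrite ler10.
case: (ltrP t b) => htb; first by exists 0%N; rewrite expr0 expr1 t1 htb.
have [k /andP[k1 k2]] : exists k, b ^+ k <= t / b < b ^+ k.+1.
  apply: IH; first by rewrite ler_pdivlMr // mul1r.
  rewrite ler_pdivrMr // (le_trans tN) // (@le_trans _ _ (N%:R * 2%:R)) //.
    have N1 : (1 <= N)%N.
      case: N tN => // tN.
      by have := le_trans (le_trans hb htb) tN; rewrite ler_nat.
    by rewrite -natrM ler_nat muln2 -addnn -addn1 leq_add2l.
  by rewrite ler_wpM2l.
exists k.+1; rewrite exprS mulrC -ler_pdivlMr // k1 /=.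
by rewrite exprS mulrC -ltr_pdivrMr.
Qed.

Section Lift.
Variables (R : rcfType) (h n d : nat) (H : rel 'I_h) (e : rel (lvert h n)).
Hypothesis H_simple : simple_graph H.
Hypothesis H_regular : regular d H.
Hypothesis e_lift : is_lift H e.
Hypothesis n_gt0 : (0 < n)%N.

Local Notation V := (lvert h n).
Local Notation M := (@adjM R h n e).
Local Notation Mbar := (@adjMbar R h n H).
Local Notation N := (@matN R h n H e).

Lemma sum_lvert (F : V -> R) : \sum_v F v = \sum_i \sum_j F (i, j).
Proof. by rewrite pair_big; apply: eq_bigr; case. Qed.

Lemma sum_indicator (T : finType) (P : pred T) :
  \sum_(i : T) (if P i then 1 else 0 : R) = #|P|%:R.
Proof. by rewrite -big_mkcond /= sumr_const. Qed.

Lemma card_neighbours i : #|[pred i' | H i i']| = d.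
Proof. by rewrite -(H_regular i) cardsE. Qed.

Lemma matN_diag u : N u u = 0.
Proof.
have Hirr : H u.1 u.1 = false by apply: negbTE; case: H_simple.
rewrite /matN /adjM /adjMbar Hirr; case E : (e u u); last by rewrite subr0.
by have := (proj1 (proj2 e_lift)) u u E; rewrite Hirr.
Qed.

Lemma adjM_sym u v : M u v = M v u.
Proof. by rewrite /adjM (proj1 e_lift). Qed.

Lemma adjMbar_sym u v : Mbar u v = Mbar v u.
Proof. by rewrite /adjMbar (proj2 H_simple). Qed.

Lemma adjM_ge0 u v : 0 <= M u v.
Proof. by rewrite /adjM; case: (e u v). Qed.

Lemma adjMbar_ge0 u v : 0 <= Mbar u v.
Proof. by rewrite /adjMbar; case: (H _ _); rewrite ?invr_ge0 ?ler0n. Qed.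

(* Each edge of [H] at [u.1] lifts to exactly one edge of [G] at [u]. *)
Lemma adjM_row_sum u : \sum_v M u v = d%:R.
Proof.
case: u => i0 j0; rewrite sum_lvert -(card_neighbours i0) -sum_indicator.
apply: eq_bigr => i _ /=; case Hi : (H i0 i).
  have [j1 [ej1 uj1]] := (proj2 (proj2 e_lift)) i0 i j0 Hi.
  rewrite (bigD1 j1) //= /adjM ej1 big1 ?addr0 // => j /negbTE nj.
  case E : (e (i0, j0) (i, j)) => //.
  by have := uj1 j E => /eqP; rewrite eq_sym nj.
apply: big1 => j _; rewrite /adjM; case E : (e (i0, j0) (i, j)) => //.
by have := (proj1 (proj2 e_lift)) _ _ E; rewrite /= Hi.
Qed.

Lemma adjMbar_row_sum u : \sum_v Mbar u v = d%:R.
Proof.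
case: u => i0 j0; rewrite sum_lvert -(card_neighbours i0) -sum_indicator.
apply: eq_bigr => i _ /=; rewrite /adjMbar /=; case: (H i0 i).
  by rewrite sumr_const card_ord -[_ *+ n]mulr_natr mulVf // pnatr_eq0 -lt0n.
by rewrite big1_eq.
Qed.

Lemma adjMbar_mul_fibre_sum_zero (x : V -> R) u :
  fibre_sum_zero x -> \sum_v Mbar u v * x v = 0.
Proof.
move=> hx; rewrite sum_lvert big1 // => i _; rewrite /adjMbar /=.
case: (H u.1 i); last by rewrite big1 // => j _; rewrite mul0r.
by rewrite -mulr_sumr hx mulr0.
Qed.

Lemma qform_matN_eigen lambda (x : V -> R) : fibre_sum_zero x ->
  (forall u, \sum_v M u v * x v = lambda * x u) ->
  qform N x = lambda * sqnorm x.
Proof.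
move=> hx hM; rewrite /qform /sqnorm mulr_sumr; apply: eq_bigr => u _.
have -> : \sum_v x u * N u v * x v = x u * \sum_v N u v * x v.
  by rewrite mulr_sumr; apply: eq_bigr => v _; rewrite mulrA.
have -> : \sum_v N u v * x v = \sum_v M u v * x v - \sum_v Mbar u v * x v.
  by rewrite -sumrB; apply: eq_bigr => v _; rewrite /matN mulrBl.
by rewrite hM adjMbar_mul_fibre_sum_zero // subr0 mulrCA expr2 mulrA.
Qed.

Lemma norm_matN_le u v : `|N u v| <= M u v + Mbar u v.
Proof.
rewrite /matN; apply: (le_trans (ler_normB _ _)).
by rewrite !ger0_norm ?adjM_ge0 ?adjMbar_ge0.
Qed.

Lemma adjMMbar_sym u v : M u v + Mbar u v = M v u + Mbar v u.
Proof. by rewrite adjM_sym adjMbar_sym. Qed.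

Lemma adjMMbar_row_sum u : \sum_v (M u v + Mbar u v) = d%:R + d%:R.
Proof. by rewrite big_split /= adjM_row_sum adjMbar_row_sum. Qed.

Lemma new_eigenvalue_unit (lambda : R) : new_eigenvalue e lambda ->
  exists x : V -> R, [/\ fibre_sum_zero x, sqnorm x = 1 &
    forall u, \sum_v M u v * x v = lambda * x u].
Proof.
case=> x [[v0 xv0] [x_fib x_eig]].
have x_gt0 : 0 < sqnorm x.
  by rewrite (lt_le_trans _ (sqr_le_sqnorm x v0)) // exprn_even_gt0.
pose r := Num.sqrt (sqnorm x).
have r_gt0 : 0 < r by rewrite sqrtr_gt0.
exists (fun u => x u / r); split.
- by move=> i; rewrite -mulr_suml x_fib mul0r.
- rewrite /sqnorm; under eq_bigr do rewrite expr_div_n.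
  by rewrite -mulr_suml sqr_sqrtr ?ltW // mulfV // gt_eqF.
- move=> u; under eq_bigr do rewrite mulrA.
  by rewrite -mulr_suml x_eig mulrA.
Qed.

End Lift.

Section SqrtNat.
Variables (R : rcfType) (m : nat).
Hypothesis m_gt0 : (0 < m)%N.
Local Notation s := (Num.sqrt (m%:R : R)).

Lemma sqrt_nat_gt0 : 0 < s.
Proof. by rewrite sqrtr_gt0 ltr0n. Qed.

Lemma sqr_sqrt_nat : s ^+ 2 = m%:R.
Proof. by rewrite sqr_sqrtr // ler0n. Qed.

Lemma sqrt_nat_ge1 : 1 <= s.
Proof. by rewrite -[X in X <= _]sqrtr1 ler_sqrt ?ler1n ?ltr01. Qed.

Lemma sqrt_nat_le : s <= m%:R.
Proof.
rewrite -[X in _ <= X]sqr_sqrt_nat -[X in X <= _]mulr1 expr2.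
by rewrite ler_wpM2l ?sqrt_nat_ge1 // ltW // sqrt_nat_gt0.
Qed.

End SqrtNat.

Section Estar.
Variables (R : rcfType) (d : nat).
Hypothesis d_gt0 : (0 < d)%N.
Local Notation sd := (Num.sqrt (d%:R : R)).
Local Notation Estar := (@Estar R d).

Lemma Estar_gt0 (a b : R) : Estar a b -> 0 < a /\ 0 < b.
Proof. by case/and4P. Qed.

Lemma Estar0l (b : R) : Estar 0 b = false.
Proof. by rewrite /Estar ltxx. Qed.

Lemma Estar0r (a : R) : Estar a 0 = false.
Proof. by rewrite /Estar ltxx andbF. Qed.

Lemma Estar_ratio (a b : R) : Estar a b -> a < sd * b /\ b < sd * a.
Proof.
have sd_gt0 := sqrt_nat_gt0 R d_gt0.
case/and4P => ha hb h1 h2; split; first by rewrite -ltr_pdivrMr.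
move: h1; rewrite ltr_pdivlMr // -(ltr_pM2l sd_gt0) mulrA mulfV ?gt_eqF //.
by rewrite mul1r.
Qed.

Lemma EstarZ (k a b : R) : 0 < k -> Estar (k * a) (k * b) = Estar a b.
Proof.
move=> hk; rewrite /Estar !pmulr_rgt0 //.
by rewrite -[k * a / (k * b)]mulf_div divff ?mul1r // gt_eqF.
Qed.

(* Off [E^*] the larger coordinate is at least [sqrt d] times the smaller one. *)
Lemma notEstar_le (a b : R) : 0 <= a -> 0 <= b -> ~~ Estar a b ->
  sd * (a * b) <= a ^+ 2 + b ^+ 2.
Proof.
have sd_gt0 := sqrt_nat_gt0 R d_gt0.
rewrite le0r => /orP[/eqP-> | ha]; first by rewrite !mul0r mulr0 expr0n add0r sqr_ge0.
rewrite le0r => /orP[/eqP-> | hb]; first by rewrite !mulr0 expr0n addr0 sqr_ge0.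
rewrite /Estar ha hb /= negb_and -!leNgt => /orP[h1 | h2].
  have h : sd * a <= b.
    by move: h1; rewrite ler_pdivrMr // => h1; rewrite mulrC -ler_pdivlMr // mulrC.
  apply: (@le_trans _ _ (b ^+ 2)); last by rewrite lerDr sqr_ge0.
  by rewrite mulrA expr2 ler_wpM2r // ltW.
have h : sd * b <= a by move: h2; rewrite ler_pdivlMr // mulrC.
apply: (@le_trans _ _ (a ^+ 2)); last by rewrite lerDl sqr_ge0.
by rewrite mulrCA expr2 ler_wpM2l // ltW.
Qed.

End Estar.

Section RestrictedForm.
Variables (R : rcfType) (h n d : nat) (A : lvert h n -> lvert h n -> R).
Local Notation V := (lvert h n).
Local Notation G w := (@restr_form R h n A (@Estar R d) w w).

Definition restrict (S : pred V) (w : V -> R) : V -> R :=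
  fun u => if S u then w u else 0.

Lemma restr_form_eq0 (w : V -> R) : (forall u, w u = 0) -> G w = 0.
Proof. by move=> w0; apply: big1 => u _; apply: big1 => v _; rewrite w0 Estar0l. Qed.

Lemma restr_formZ (q : R) (w : V -> R) : 0 < q ->
  G (fun u => q * w u) = q ^+ 2 * G w.
Proof.
move=> q_gt0; rewrite /restr_form mulr_sumr; apply: eq_bigr => u _.
rewrite mulr_sumr; apply: eq_bigr => v _; rewrite EstarZ //.
by case: ifP => _; [ring | rewrite mulr0].
Qed.

Lemma restr_form_restrict S (w : V -> R) : G (restrict S w) =
  \sum_u \sum_v (if S u && S v && Estar d (w u) (w v) then w u * A u v * w v else 0).
Proof.
apply: eq_bigr => u _; apply: eq_bigr => v _; rewrite /restrict.
by case: (S u); case: (S v); rewrite /= ?Estar0l ?Estar0r.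
Qed.

Lemma sqnorm_restrict S (w : V -> R) :
  sqnorm (restrict S w) = \sum_u (if S u then w u ^+ 2 else 0).
Proof. by apply: eq_bigr => u _; rewrite /restrict; case: (S u); rewrite ?expr0n. Qed.

Lemma sqnorm_restrict_le S (w : V -> R) : sqnorm (restrict S w) <= sqnorm w.
Proof. by rewrite sqnorm_restrict; apply: ler_sum => u _; case: (S u); rewrite ?sqr_ge0. Qed.

End RestrictedForm.

Section Dyadic.
Variables (R : rcfType) (h n d : nat) (A : lvert h n -> lvert h n -> R).
Hypothesis n_gt0 : (0 < n)%N.
Hypothesis h_gt0 : (0 < h)%N.
Hypothesis d_ge2 : (2 <= d)%N.
Variable B : R.
Hypothesis Z_bound : forall x : lvert h n -> R, @inZ R h n d x ->
  `|@restr_form R h n A (@Estar R d) x x| <= B.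

Local Notation V := (lvert h n).
Local Notation G w := (@restr_form R h n A (@Estar R d) w w).
Local Notation sd := (Num.sqrt (d%:R : R)).
Local Notation snh := (Num.sqrt ((n * h)%:R : R)).
Local Notation Dp := (@Dplus R n h).

Let d_gt0 : (0 < d)%N. Proof. exact: leq_trans d_ge2. Qed.
Let nh_gt0 : (0 < n * h)%N. Proof. by rewrite muln_gt0 n_gt0. Qed.
Let snh_gt0 : 0 < snh := sqrt_nat_gt0 R nh_gt0.
Let sd_gt0 : 0 < sd := sqrt_nat_gt0 R d_gt0.
Lemma Dplus_ge0 t : Dp t -> 0 <= t.
Proof. by case=> [-> // | [k ->]]; rewrite divr_ge0 ?exprn_ge0 ?ler0n ?(ltW snh_gt0). Qed.

Lemma Dplus_ge_inv t : Dp t -> t != 0 -> snh^-1 <= t.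
Proof.
case=> [-> | [k ->] _]; first by rewrite eqxx.
rewrite -[X in X <= _]mul1r ler_pM2r ?invr_gt0 //.
by apply: exprn_ege1; rewrite ler1n.
Qed.

Lemma Dplus_restrict S (w : V -> R) : (forall u, Dp (w u)) ->
  forall u, Dp (restrict S w u).
Proof. by move=> hw u; rewrite /restrict; case: (S u) => //; left. Qed.

Lemma bound_ge0 : 0 <= B.
Proof.
apply: le_trans (Z_bound (x := fun _ => 0) _); first by rewrite normr_ge0.
split; first by rewrite big1 ?ler0n // => u _; rewrite expr0n.
by split=> [v | u v]; [left | rewrite eqxx].
Qed.

Lemma sqr_inv_sqrt_nh : snh^-1 ^+ 2 * (n * h)%:R = 1.
Proof. by rewrite -[X in _ * X](sqr_sqrt_nat R (n * h)) exprVn mulVf // expf_neq0 // gt_eqF. Qed.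

(* Below [1/sqrt(nh)] round to [0] or [1/sqrt(nh)]; above, to the two neighbouring powers of two. *)
Lemma dyadic_round_nonneg t : 0 <= t -> t <= 1 -> exists a b : R,
  [/\ a <= t <= b, Dp a, Dp b, a ^+ 2 <= 4%:R * t ^+ 2 + snh^-1 ^+ 2 &
      b ^+ 2 <= 4%:R * t ^+ 2 + snh^-1 ^+ 2].
Proof.
move=> t_ge0 t_le1; have t2_ge0 : 0 <= 4%:R * t ^+ 2 by rewrite mulr_ge0 ?sqr_ge0.
have [t_small | t_big] := lerP t snh^-1.
  exists 0, snh^-1; split; rewrite ?t_ge0 ?t_small ?expr0n ?addr_ge0 ?sqr_ge0 ?lerDr //.
    by left.
  by right; exists 0%N; rewrite expr0 mul1r.
have [k /andP[k1 k2]] : exists k, 2%:R ^+ k <= t * snh < 2%:R ^+ k.+1.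
  apply: (@exprn_bracket R 2%:R (lexx _) (n * h)).
    by rewrite -[X in X <= _](mulVf (lt0r_neq0 snh_gt0)) ler_pM2r // ltW.
  rewrite -[X in _ <= X](sqr_sqrt_nat R (n * h)) expr2 ler_wpM2r ?(ltW snh_gt0) //.
  exact: le_trans t_le1 (sqrt_nat_ge1 R nh_gt0).
exists (2%:R ^+ k / snh), (2%:R ^+ k.+1 / snh).
have a_le : 2%:R ^+ k / snh <= t by rewrite ler_pdivrMr.
have a_ge0 : 0 <= 2%:R ^+ k / snh by rewrite divr_ge0 ?exprn_ge0 ?ler0n ?(ltW snh_gt0).
have b_eq : 2%:R ^+ k.+1 / snh = 2%:R * (2%:R ^+ k / snh) by rewrite exprS mulrA.
have a2_le : (2%:R ^+ k / snh) ^+ 2 <= t ^+ 2 by rewrite lerXn2r ?nnegrE.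
split.
- by rewrite a_le ler_pdivlMr // ltW.
- by right; exists k.
- by right; exists k.+1.
- rewrite (le_trans a2_le) // ler_wpDr ?sqr_ge0 //.
  by rewrite -[X in X <= _]mul1r ler_wpM2r ?sqr_ge0 ?ler1n.
- have four : (2%:R : R) ^+ 2 = 4%:R by rewrite -natrX.
  by rewrite b_eq exprMn four ler_wpDr ?sqr_ge0 // ler_wpM2l ?ler0n.
Qed.

Lemma dyadic_round t : `|t| <= 1 -> exists a b : R,
  [/\ a <= t <= b, Dp `|a|, Dp `|b|, a ^+ 2 <= 4%:R * t ^+ 2 + snh^-1 ^+ 2 &
      b ^+ 2 <= 4%:R * t ^+ 2 + snh^-1 ^+ 2].
Proof.
have [t_ge0 | t_lt0] := lerP 0 t.
  rewrite ger0_norm // => t_le1.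
  have [a [b [tab Da Db a2 b2]]] := dyadic_round_nonneg t_ge0 t_le1.
  by exists a, b; rewrite !ger0_norm ?Dplus_ge0.
rewrite ltr0_norm // => t_le1.
have Nt_ge0 : 0 <= - t by rewrite oppr_ge0 ltW.
have [a [b [/andP[a_le b_ge] Da Db a2 b2]]] := dyadic_round_nonneg Nt_ge0 t_le1.
exists (- b), (- a); rewrite !normrN !ger0_norm ?Dplus_ge0 //.
by rewrite !sqrrN -(sqrrN t) lerNl b_ge lerNr a_le.
Qed.

Lemma dyadic_box (x : V -> R) : sqnorm x = 1 ->
  exists a b : V -> R, (forall u, a u <= x u <= b u) /\
    forall y, (forall u, y u = a u \/ y u = b u) ->
      (forall u, Dp `|y u|) /\ sqnorm y <= 5%:R.
Proof.
move=> x_unit.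
have /fin_all_exists [ab ab_round] : forall u, exists ab : R * R,
    [/\ ab.1 <= x u <= ab.2, Dp `|ab.1|, Dp `|ab.2|,
     ab.1 ^+ 2 <= 4%:R * x u ^+ 2 + snh^-1 ^+ 2 &
     ab.2 ^+ 2 <= 4%:R * x u ^+ 2 + snh^-1 ^+ 2].
  move=> u; have xu_le1 : `|x u| <= 1.
    rewrite -(expr_le1 (isT : (0 < 2)%N)) ?normr_ge0 // real_normK ?num_real //.
    by rewrite -x_unit sqr_le_sqnorm.
  by have [a [b hab]] := dyadic_round xu_le1; exists (a, b).
exists (fun u => (ab u).1), (fun u => (ab u).2); split => [u | y y_vertex].
  by case: (ab_round u).
have y_round u : Dp `|y u| /\
    y u ^+ 2 <= 4%:R * x u ^+ 2 + snh^-1 ^+ 2.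
  by case: (ab_round u) => _ Da Db a2 b2; case: (y_vertex u) => ->.
split=> [u | ]; first exact: (y_round u).1.
rewrite (le_trans (ler_sum _ (fun u _ => (y_round u).2))) //.
rewrite big_split /= -mulr_sumr -/(sqnorm x) x_unit mulr1 sumr_const card_prod !card_ord.
by rewrite -[_ *+ (h * n)]mulr_natr [(h * n)%N]mulnC sqr_inv_sqrt_nh // natr1.
Qed.

(* Rescaling by a power of two puts the squared norm into [10/4, 10], i.e. into [Z]. *)
Lemma restr_form_le_sqnorm (z : V -> R) : (forall u, Dp (z u)) ->
  (forall u v, z v != 0 -> z u <= d%:R * z v) -> sqnorm z <= 10%:R ->
  `|G z| <= sqnorm z * B.
Proof.
move=> zD z_ratio z10.
have [v0 zv0 | z0] := pickP (fun v => z v != 0); last first.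
  rewrite restr_form_eq0 ?normr0 ?mulr_ge0 ?sqnorm_ge0 ?bound_ge0 // => u.
  by apply/eqP/negbFE; rewrite z0.
have z_ge : snh^-1 ^+ 2 <= sqnorm z.
  rewrite /sqnorm (bigD1 v0) //=; apply: ler_wpDr.
    by apply: sumr_ge0 => u _; rewrite sqr_ge0.
  have zv0_ge := Dplus_ge_inv (zD v0) zv0.
  by rewrite lerXn2r ?nnegrE ?invr_ge0 ?(ltW snh_gt0) ?(Dplus_ge0 (zD v0)).
have z_gt0 : 0 < sqnorm z.
  by apply: lt_le_trans z_ge; rewrite exprn_gt0 // invr_gt0.
have [j /andP[j1 j2]] : exists j, 4%:R ^+ j <= 10%:R / sqnorm z < 4%:R ^+ j.+1.
  apply: (@exprn_bracket R 4%:R _ (10 * (n * h))); first by rewrite ler_nat.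
    by rewrite ler_pdivlMr // mul1r.
  rewrite ler_pdivrMr // natrM -[X in X <= _]mulr1 -mulrA ler_wpM2l ?ler0n //.
  by rewrite -[X in X <= _]sqr_inv_sqrt_nh mulrC ler_wpM2l ?ler0n.
pose q : R := 2%:R ^+ j.
have q_gt0 : 0 < q by rewrite exprn_gt0 // ltr0n.
have q2 : q ^+ 2 = 4%:R ^+ j by rewrite -exprM mulnC exprM -natrX.
have qz_Z : @inZ R h n d (fun u => q * z u).
  split; last split.
  - have -> : \sum_v (q * z v) ^+ 2 = q ^+ 2 * sqnorm z.
      by rewrite /sqnorm mulr_sumr; apply: eq_bigr => v _; rewrite exprMn.
    by rewrite q2 -ler_pdivlMr.
  - move=> u; case: (zD u) => [-> | [k ->]]; first by left; rewrite mulr0.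
    by right; exists (j + k)%N; rewrite exprD mulrA.
  - move=> u v; rewrite mulf_eq0 negb_or => /andP[_ zv].
    by rewrite mulrCA ler_wpM2l ?z_ratio ?(ltW q_gt0).
have := Z_bound qz_Z.
rewrite restr_formZ // normrM ger0_norm ?exprn_ge0 ?(ltW q_gt0) // q2.
have qz_ge1 : 1 <= 4%:R ^+ j * sqnorm z.
  move: j2; rewrite ltr_pdivrMr // exprS -mulrA => j2.
  rewrite -(ler_pM2l (_ : 0 < 4%:R)) ?ltr0n // mulr1.
  by apply: le_trans (ltW j2); rewrite ler_nat.
move=> hG; rewrite -(ler_pM2l (_ : 0 < 4%:R ^+ j)) ?exprn_gt0 ?ltr0n //.
by apply: (le_trans hG); rewrite mulrA -[X in X <= _]mul1r ler_wpM2r ?bound_ge0.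
Qed.

Section Telescope.
Variable w : V -> R.
Hypothesis w_Dplus : forall u, Dp (w u).
Hypothesis w_sqnorm : sqnorm w <= 10%:R.

Definition level m : R := sd ^+ m / snh.
Definition below k := restrict (fun u => w u < level k) w.
Definition band lo hi := restrict (fun u => (lo <= w u) && (w u < hi)) w.

Lemma level_gt0 m : 0 < level m.
Proof. by rewrite divr_gt0 // exprn_gt0. Qed.

Lemma levelS m : level m.+1 = sd * level m.
Proof. by rewrite /level exprS mulrA. Qed.

Lemma levelSS m : level m.+2 = d%:R * level m.
Proof. by rewrite !levelS mulrA -expr2 sqr_sqrt_nat. Qed.

Lemma level_mono m k : (m <= k)%N -> level m <= level k.
Proof.
move=> le_mk; rewrite ler_wpM2r ?invr_ge0 ?(ltW snh_gt0) //.
by rewrite ler_weXn2l // sqrt_nat_ge1.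
Qed.

Lemma sqnorm_band m k : (m <= k)%N ->
  sqnorm (band (level m) (level k)) = sqnorm (below k) - sqnorm (below m).
Proof.
move=> le_mk; rewrite !sqnorm_restrict -sumrB; apply: eq_bigr => u _.
case: (ltP (w u) (level m)) => hm /=.
  by rewrite (lt_le_trans hm (level_mono le_mk)) subrr.
by case: (w u < level k); rewrite subr0.
Qed.

Lemma band_ratio lo hi : hi <= d%:R * lo -> forall u v,
  band lo hi v != 0 -> band lo hi u <= d%:R * band lo hi v.
Proof.
move=> hlh u v; rewrite /band /restrict.
case: ifP => [/andP[hv _] _ | _]; last by rewrite eqxx.
case: ifP => [/andP[_ hu] | _]; last by rewrite mulr_ge0 ?ler0n ?Dplus_ge0.
by rewrite (le_trans (ltW hu)) // (le_trans hlh) // ler_wpM2l.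
Qed.

Lemma below1_ratio u v : below 1 v != 0 -> below 1 u <= d%:R * below 1 v.
Proof.
rewrite /below /restrict; case: ifP => [_ wv0 | _]; last by rewrite eqxx.
have wv_ge : level 0 <= w v by rewrite /level expr0 mul1r Dplus_ge_inv.
case: ifP => [wu1 | _]; last by rewrite mulr_ge0 ?ler0n ?Dplus_ge0.
rewrite (le_trans (ltW wu1)) // levelS (@le_trans _ _ (d%:R * level 0)) //.
  by rewrite ler_wpM2r ?sqrt_nat_le // ltW // level_gt0.
by rewrite ler_wpM2l.
Qed.

(* Pairs in [E^*] newly counted at level [m.+2] have both coordinates in
   [[level m, level m.+2)]. *)
Lemma restr_form_below_step m :
  G (below m.+2) - G (below m.+1) =
  G (band (level m) (level m.+2)) - G (band (level m) (level m.+1)).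
Proof.
rewrite !restr_form_restrict -!sumrB; apply: eq_bigr => u _.
rewrite -!sumrB; apply: eq_bigr => v _.
case E : (Estar d (w u) (w v)); last by rewrite !andbF subrr.
have [ltu ltv] := Estar_ratio d_gt0 E.
have lt12 x : x < level m.+1 -> x < level m.+2.
  by move=> /lt_le_trans; apply; apply: level_mono.
have lo_of x y : x < sd * y -> level m.+1 <= x -> level m <= y.
  by move=> hxy /le_lt_trans /(_ hxy); rewrite levelS ltr_pM2l // => /ltW.
have [/andP[u1 v1] | not1] := boolP ((w u < level m.+1) && (w v < level m.+1)).
  by rewrite u1 v1 (lt12 _ u1) (lt12 _ v1) /= !andbT !subrr.
have [ua va] : level m <= w u /\ level m <= w v.
  case/nandP: (not1); rewrite -leNgt => ge1.
    by rewrite (le_trans (level_mono (leqnSn m)) ge1) (lo_of _ _ ltu ge1).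
  by rewrite (le_trans (level_mono (leqnSn m)) ge1) (lo_of _ _ ltv ge1).
by rewrite ua va /= !andbT (negbTE not1).
Qed.

Lemma restr_form_below_le k :
  `|G (below k.+1)| <= (sqnorm (below k.+1) + sqnorm (below k) + sqnorm (below k)) * B.
Proof.
have band_le lo hi : hi <= d%:R * lo ->
    `|G (band lo hi)| <= sqnorm (band lo hi) * B.
  move=> hlh; apply: restr_form_le_sqnorm; first exact: Dplus_restrict.
    exact: band_ratio.
  exact: le_trans (sqnorm_restrict_le _ _) w_sqnorm.
have sq_ge0 k' := sqnorm_ge0 (below k').
elim: k => [|k IH].
  have := restr_form_le_sqnorm (Dplus_restrict _ w_Dplus) below1_ratio
    (le_trans (sqnorm_restrict_le _ _) w_sqnorm).
  by move/le_trans; apply; rewrite ler_wpM2r ?bound_ge0 // -addrA lerDl addr_ge0.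
have W2 := band_le (level k) (level k.+2).
rewrite levelSS lexx -levelSS in W2.
have W1 := band_le (level k) (level k.+1).
rewrite levelS ler_wpM2r ?sqrt_nat_le ?(ltW (level_gt0 k)) // -levelS in W1.
have -> : G (below k.+2) = G (below k.+1) +
    (G (band (level k) (level k.+2)) - G (band (level k) (level k.+1))).
  by rewrite -restr_form_below_step addrC subrK.
rewrite (le_trans (ler_normD _ _)) // (le_trans (lerD IH (ler_normB _ _))) //.
rewrite (le_trans (lerD (lexx _) (lerD (W2 isT) (W1 isT)))) //.
rewrite (sqnorm_band (leqnSn k)) (@sqnorm_band k k.+2) ?leqW //.
by rewrite -!mulrDl ler_wpM2r ?bound_ge0 //; lra.
Qed.

Lemma below_eventually : exists K, forall u, w u < level K.
Proof.
have /fin_all_exists [K hK] : forall u, exists k, w u < level k.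
  move=> u; case: (w_Dplus u) => [-> | [k ->]].
    by exists 0%N; apply: level_gt0.
  exists (2 * k.+1)%N; rewrite /level exprM sqr_sqrt_nat ltr_pM2r ?invr_gt0 //.
  rewrite (lt_le_trans (_ : _ < 2%:R ^+ k.+1)) //.
    by rewrite exprS -[X in X < _]mul1r ltr_pM2r ?exprn_gt0 ?ltr0n // ltr1n.
  by rewrite lerXn2r ?nnegrE ?ler0n // ler_nat.
exists (\max_u K u) => u.
by rewrite (lt_le_trans (hK u)) // level_mono // leq_bigmax.
Qed.

Lemma restr_form_le_3sqnorm : `|G w| <= (sqnorm w + sqnorm w + sqnorm w) * B.
Proof.
have [K wK] := below_eventually.
have w_below : below K.+1 = w.
  apply: functional_extensionality => u; rewrite /below /restrict.
  by rewrite (lt_le_trans (wK u)) // level_mono.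
have -> : G w = G (below K.+1) by rewrite w_below.
rewrite (le_trans (restr_form_below_le K)) // ler_wpM2r ?bound_ge0 //.
by rewrite !lerD ?sqnorm_restrict_le.
Qed.

End Telescope.

End Dyadic.

Section LiftForm.
Variables (R : rcfType) (h n d : nat) (H : rel 'I_h) (e : rel (lvert h n)).
Hypothesis d_ge2 : (2 <= d)%N.
Hypothesis H_simple : simple_graph H.
Hypothesis H_regular : regular d H.
Hypothesis e_lift : is_lift H e.
Hypothesis n_gt0 : (0 < n)%N.
Hypothesis h_gt0 : (0 < h)%N.
Variable B : R.

Local Notation V := (lvert h n).
Local Notation M := (@adjM R h n e).
Local Notation Mbar := (@adjMbar R h n H).
Local Notation N := (@matN R h n H e).
Local Notation G w := (@restr_form R h n N (@Estar R d) w w).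
Local Notation sd := (Num.sqrt (d%:R : R)).
Local Notation Dp := (@Dplus R n h).

Hypothesis Z_bound : forall x : V -> R, @inZ R h n d x -> `|G x| <= B.

Let d_gt0 : (0 < d)%N. Proof. exact: leq_trans d_ge2. Qed.
Let B_ge0 : 0 <= B := bound_ge0 Z_bound.
Let sd_gt0 : 0 < sd := sqrt_nat_gt0 R d_gt0.

Definition qform_in (y : V -> R) : R :=
  \sum_u \sum_v (if Estar d `|y u| `|y v| then y u * N u v * y v else 0).
Definition qform_off (y : V -> R) : R :=
  \sum_u \sum_v (if Estar d `|y u| `|y v| then 0 else y u * N u v * y v).

Lemma qform_split (y : V -> R) : qform N y = qform_in y + qform_off y.
Proof.
rewrite -big_split /=; apply: eq_bigr => u _; rewrite -big_split /=.
by apply: eq_bigr => v _; case: ifP => _; rewrite ?addr0 ?add0r.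
Qed.

Lemma qform_off_le (y : V -> R) : sd * `|qform_off y| <= 4%:R * d%:R * sqnorm y.
Proof.
have term_le u v : sd * `|if Estar d `|y u| `|y v| then 0 else y u * N u v * y v|
    <= (M u v + Mbar u v) * (y u ^+ 2 + y v ^+ 2).
  case: ifPn => hE.
    by rewrite normr0 mulr0 mulr_ge0 ?addr_ge0 ?sqr_ge0 ?adjM_ge0 ?adjMbar_ge0.
  have := notEstar_le d_gt0 (normr_ge0 (y u)) (normr_ge0 (y v)) hE.
  rewrite !real_normK ?num_real // => yuv.
  have -> : sd * `|y u * N u v * y v| = `|N u v| * (sd * (`|y u| * `|y v|)).
    by rewrite !normrM; ring.
  rewrite (le_trans (ler_wpM2l (normr_ge0 _) yuv)) //.
  by rewrite ler_wpM2r ?addr_ge0 ?sqr_ge0 ?norm_matN_le.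
rewrite (le_trans (ler_wpM2l (ltW sd_gt0) (ler_norm_sum _ _ _))) // mulr_sumr.
rewrite (le_trans (ler_sum _ (fun u _ => ler_wpM2l (ltW sd_gt0) (ler_norm_sum _ _ _)))) //.
under eq_bigr do rewrite mulr_sumr.
rewrite (le_trans (ler_sum _ (fun u _ => ler_sum _ (fun v _ => term_le u v)))) //.
rewrite (sum_sym_sqnorm _ (adjMMbar_sym R H_simple e_lift)
  (adjMMbar_row_sum R H_regular e_lift n_gt0)).
by rewrite ler_wpM2r ?sqnorm_ge0 //; lra.
Qed.

Section Signs.
Variable y : V -> R.

Local Notation y_abs := (fun u => `|y u|).
Local Notation y_pos := (restrict (fun u => 0 < y u) y_abs).
Local Notation y_neg := (restrict (fun u => y u < 0) y_abs).

(* On [E^*] both coordinates are nonzero, and [y u * y v] is [|y u| * |y v|] for equal signs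
   and its negative otherwise. *)
Lemma qform_in_signs : qform_in y = G y_pos + G y_pos + G y_neg + G y_neg - G y_abs.
Proof.
rewrite !restr_form_restrict -!big_split -sumrB; apply: eq_bigr => u _ /=.
rewrite -!big_split -sumrB; apply: eq_bigr => v _ /=.
case hE : (Estar d `|y u| `|y v|); last by rewrite !andbF !addr0 subr0.
have [yu_gt0 yv_gt0] := Estar_gt0 hE; rewrite !andbT.
case: (ltgtP (y u) 0) => su; last by move: yu_gt0; rewrite su normr0 ltxx.
- case: (ltgtP (y v) 0) => sv; last by move: yv_gt0; rewrite sv normr0 ltxx.
  + by rewrite /= (ltr0_norm su) (ltr0_norm sv); ring.
  + by rewrite /= (ltr0_norm su) (gtr0_norm sv); ring.
- case: (ltgtP (y v) 0) => sv; last by move: yv_gt0; rewrite sv normr0 ltxx.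
  + by rewrite /= (gtr0_norm su) (ltr0_norm sv); ring.
  + by rewrite /= (gtr0_norm su) (gtr0_norm sv); ring.
Qed.

Hypothesis y_Dplus : forall u, Dp `|y u|.
Hypothesis y_sqnorm : sqnorm y <= 5%:R.

Let sqnorm_abs : sqnorm y_abs = sqnorm y.
Proof. by apply: eq_bigr => u _; rewrite real_normK ?num_real. Qed.

Let restrict_abs_le S : `|G (restrict S y_abs)| <= 15%:R * B.
Proof.
have w10 : sqnorm (restrict S y_abs) <= 10%:R.
  rewrite (le_trans (sqnorm_restrict_le _ _)) // sqnorm_abs.
  by rewrite (le_trans y_sqnorm) // ler_nat.
rewrite (le_trans (restr_form_le_3sqnorm n_gt0 h_gt0 d_ge2 Z_bound
  (Dplus_restrict _ y_Dplus) w10)) // ler_wpM2r //.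
have := sqnorm_restrict_le S y_abs.
rewrite sqnorm_abs => /le_trans/(_ y_sqnorm) le5.
by rewrite (le_trans (lerD (lerD le5 le5) le5)) // -!natrD.
Qed.

Lemma qform_in_le : `|qform_in y| <= 75%:R * B.
Proof.
have abs_le : `|G y_abs| <= 15%:R * B.
  have -> : y_abs = restrict predT y_abs by [].
  exact: restrict_abs_le.
have pos_le := restrict_abs_le (fun u => 0 < y u).
have neg_le := restrict_abs_le (fun u => y u < 0).
have := ler_normB (G y_pos + G y_pos + G y_neg + G y_neg) (G y_abs).
have := ler_normD (G y_pos + G y_pos + G y_neg) (G y_neg).
have := ler_normD (G y_pos + G y_pos) (G y_neg).
have := ler_normD (G y_pos) (G y_pos).
rewrite qform_in_signs; lra.
Qed.

Lemma qform_matN_le : `|qform N y| <= 75%:R * B + 20%:R * sd.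
Proof.
rewrite qform_split (le_trans (ler_normD _ _)) // lerD ?qform_in_le //.
rewrite -(ler_pM2l sd_gt0) (le_trans (qform_off_le y)) //.
rewrite mulrCA -expr2 sqr_sqrt_nat (le_trans (ler_wpM2l _ y_sqnorm)) ?mulr_ge0 //.
by rewrite mulrAC -natrM.
Qed.

End Signs.

End LiftForm.

Theorem proposition3p3 (R : rcfType) (d h n : nat) (H : rel 'I_h)
    (e : rel (lvert h n)) :
  (2 <= d)%N -> simple_graph H -> regular d H -> is_lift H e ->
  forall B : R,
    (forall x : lvert h n -> R, @inZ R h n d x ->
       `|@restr_form R h n (@matN R h n H e) (@Estar R d) x x| <= B) ->
  forall lambda : R, @new_eigenvalue R h n e lambda ->
    `|lambda| <= 96%:R * B + 480%:R * Num.sqrt (d%:R : R).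
Proof.
move=> d_ge2 H_simple H_regular e_lift B Z_bound lambda new_lambda.
have [[i j] _] : exists v : lvert h n, True by case: new_lambda => x [[v _] _]; exists v.
have h_gt0 : (0 < h)%N by apply: leq_ltn_trans (ltn_ord i).
have n_gt0 : (0 < n)%N by apply: leq_ltn_trans (ltn_ord j).
have [x [x_fib x_unit x_eig]] := new_eigenvalue_unit new_lambda.
have qx : qform (matN R H e) x = lambda.
  by rewrite (qform_matN_eigen H x_fib x_eig) x_unit mulr1.
have [a [b [x_box rounded]]] := dyadic_box n_gt0 h_gt0 x_unit.
have [y y_vertex le_qy] := abs_qform_box_vertex (matN_diag R H_simple e_lift) x_box.
have [y_Dplus y_sqnorm] := rounded y y_vertex.
rewrite -qx (le_trans le_qy) // (le_trans (qform_matN_le d_ge2 H_simple H_regular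
  e_lift n_gt0 h_gt0 Z_bound y_Dplus y_sqnorm)) //.
by rewrite lerD ?ler_wpM2r ?ler_nat ?sqrtr_ge0 ?(bound_ge0 Z_bound).
Qed.
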